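(* Let $\lambda$ be a partition with at most $n$ parts, let $\bar\lambda\in\mathbb{N}^n$ be obtained from $\lambda$ by replacing every part equal to $1$ by $0$, let $\nu\in S_n(\bar\lambda)$ be a rearrangement of $\bar\lambda$, and let $S\subseteq\{1,\dots,n\}$ with $\#S=\ell(\lambda)$ (the number of nonzero parts of $\lambda$). Then $$\sum_{\substack{\mu\in S_n(\lambda)\\ \mathrm{Supp}(\mu)=S}}a^\nu_\mu\big|_{q=1}=1.$$
   Context: $S_n(\lambda)$ is the set of rearrangements of $\lambda$, and $\mathrm{Supp}(\mu)=\{i:\mu_i>0\}$. Generalized two-line queues and $a^\nu_\mu\in\mathbb{Q}(q,t)$. For $\nu,\mu\in\mathbb{N}^n$ (top row $\nu$, bottom row $\mu$), require: $\nu$ has no part equal to $1$; $\#\{i:\mu_i=j\}=\#\{i:\nu_i=j\}$ for every $j>1$; and for each $i$, $\mu_i=0$ or $\nu_i\le\mu_i$. Place a ball labeled $\nu_i$ in column $i$ of the top row when $\nu_i>0$, and a ball labeled $\mu_i$ in column $i$ of the bottom row when $\mu_i>0$. A generalized two-line queue in $\mathcal{Q}^\nu_\mu$ is a bijection pairing each top ball with a bottom ball of the same label, such that whenever a top ball of label $a$ lies directly above a bottom ball of label $a$ they are paired to each other (trivial pairing); each pairing is drawn as the shortest strand going straight down or left to right, wrapping around cyclically (columns mod $n$). Weights: process top balls in decreasing order of label, ties broken right to left. For a nontrivial pairing $p$ joining a top ball of label $a$ in column $j$ to a bottom ball in column $j'$, the free balls for $p$ are the bottom-row balls not matched before $p$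 (excluding bottom balls of label $a$ that are trivially paired); $\mathrm{free}(p)$ is their number, and $\mathrm{skipped}(p)$ is the number of free balls in columns $j+1,\dots,j'-1$ (mod $n$). Set $\mathrm{wt}(p)=\frac{(1-t)t^{\mathrm{skipped}(p)}}{1-q^{a-1}t^{\mathrm{free}(p)}}q^{a-1}$ if $j'<j$ and $\frac{(1-t)t^{\mathrm{skipped}(p)}}{1-q^{a-1}t^{\mathrm{free}(p)}}$ if $j'>j$. Then $a^\nu_\mu=\sum_{Q\in\mathcal{Q}^\nu_\mu}\prod_{p\text{ nontrivial}}\mathrm{wt}(p)$ (zero if $\mathcal{Q}^\nu_\mu$ is empty), and $a^\nu_\mu|_{q=1}$ is its specialization at $q=1$. *)

From HB Require Import structures.
From mathcomp Require Import all_boot all_order all_algebra.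
Set Implicit Arguments. Unset Strict Implicit. Unset Printing Implicit Defensive.
Import GRing.Theory.
Local Open Scope ring_scope.

(* Columns are 'I_n (0-based); compositions are seq nat of size n, the
   entry in column i being nth 0 s i. *)

Section TwoLineQueues.
Variables (n : nat) (nu mu : seq nat).

Definition nuv (i : 'I_n) : nat := nth 0%N nu i.
Definition muv (i : 'I_n) : nat := nth 0%N mu i.

Definition tlq_require : bool :=
  [&& size nu == n, size mu == n,
      all (fun x => x != 1%N) nu,
      perm_eq [seq x <- mu | (1 < x)%N] [seq x <- nu | (1 < x)%N] &
      [forall i : 'I_n, (muv i == 0%N) || (nuv i <= muv i)%N]].

(* A queue is encoded by f : column of top ball |-> column of its bottom
   partner; on columns without top ball f is fixed to be the identity. *)
Definition tlq_valid (f : {ffun 'I_n -> 'I_n}) : bool :=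
  [&& [forall i, (nuv i == 0%N) ==> (f i == i)],
      [forall i, (0 < nuv i)%N ==> (muv (f i) == nuv i)],
      [forall i, forall i',
         [&& (0 < nuv i)%N, (0 < nuv i')%N & f i == f i'] ==> (i == i')],
      [forall k, (1 < muv k)%N ==> [exists i, (0 < nuv i)%N && (f i == k)]] &
      [forall i, ((0 < nuv i)%N && (muv i == nuv i)) ==> (f i == i)]].

Definition queues : {set {ffun 'I_n -> 'I_n}} := [set f | tlq_valid f].

Definition processed_before (i j : 'I_n) : bool :=
  (nuv j < nuv i)%N || ((nuv i == nuv j) && (j < i)%N).

Definition matched_before (f : {ffun 'I_n -> 'I_n}) (j k : 'I_n) : bool :=
  [exists i, [&& (0 < nuv i)%N, processed_before i j & f i == k]].

Definition is_free (f : {ffun 'I_n -> 'I_n}) (j k : 'I_n) : bool :=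
  [&& (0 < muv k)%N, ~~ matched_before f j k &
      ~~ ((nuv k == nuv j) && (muv k == nuv j))].

Definition cyc_between (j j' k : 'I_n) : bool :=
  if (j < j')%N then (j < k < j')%N else ((j < k)%N || (k < j')%N).

Definition free_count f j : nat := #|[set k | is_free f j k]|.
Definition skipped f j : nat := #|[set k | is_free f j k && cyc_between j (f j) k]|.

Variable F : fieldType.

Definition wt (q t : F) (f : {ffun 'I_n -> 'I_n}) (j : 'I_n) : F :=
  (1 - t) * t ^+ skipped f j / (1 - q ^+ (nuv j).-1 * t ^+ free_count f j)
  * (if (f j < j)%N then q ^+ (nuv j).-1 else 1).

(* a^nu_mu evaluated at (q, t); zero when the requirements fail or the set
   of queues is empty *)
Definition acoef (q t : F) : F :=
  if tlq_require then
    \sum_(f in queues) \prod_(j | (0 < nuv j)%N && (f j != j)) wt q t f j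
  else 0.

End TwoLineQueues.

Definition Qt := {fraction {poly rat}}.
Definition tQ : Qt := tofrac ('X : {poly rat}).

Definition acoef_q1 (n : nat) (nu mu : seq nat) : Qt :=
  @acoef n nu mu Qt 1 tQ.

Definition lambar (lam : seq nat) : seq nat :=
  [seq (if x == 1%N then 0%N else x) | x <- lam].

Definition supp (n : nat) (mu : seq nat) : {set 'I_n} :=
  [set i : 'I_n | (0 < nth 0%N mu i)%N].

From mathcomp Require Import all_boot all_order all_algebra.
From mathcomp Require Import zify.
Set Implicit Arguments. Unset Strict Implicit. Unset Printing Implicit Defensive.
Import GRing.Theory.
Local Open Scope ring_scope.

(* Summing a^nu_mu over all mu with Supp(mu) = S amounts to
   letting each top ball, taken in processing order, either take the forced
   trivial pairing (when its own column is still free) or choose any free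
   column of S whose top label differs from its own; mu is then read off from
   these choices.  At q = 1 the weight of a choice depends only on its cyclic
   rank r among the c available columns, and sum_(r < c) (1-t) t^r / (1-t^c)
   = 1, so summing out the choices one ball at a time gives 1.  There is
   always a column to choose because S has at least as many columns as there
   are top balls. *)

(** * Sums over successive choices *)

Definition ffun_upd (aT : finType) (rT : Type) (f : {ffun aT -> rT}) (x : aT) (y : rT) :
    {ffun aT -> rT} :=
  [ffun i => if i == x then y else f i].

Lemma ffun_updE (aT : finType) (rT : Type) (f : {ffun aT -> rT}) x y i :
  ffun_upd f x y i = if i == x then y else f i.
Proof. by rewrite ffunE. Qed.

Lemma sum_ffun_upd (R : nmodType) (aT rT : finType) (x : aT) (y0 : rT)
    (F : {ffun aT -> rT} -> R) :
  \sum_f F f = \sum_(g : {ffun aT -> rT} | g x == y0) \sum_y F (ffun_upd g x y).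
Proof.
rewrite (exchange_big_dep predT) //=.
rewrite (partition_big (fun f : {ffun aT -> rT} => f x) predT) //=.
apply: eq_bigr => y _.
rewrite (reindex_onto (fun g => ffun_upd g x y) (fun f => ffun_upd f x y0)) /=; last first.
  move=> f /eqP fx; apply/ffunP => i; rewrite !ffun_updE.
  by case: eqP => // ->; rewrite fx.
apply: eq_bigl => g; rewrite ffun_updE !eqxx andbT.
apply/eqP/eqP => [<-|gx]; first by rewrite ffun_updE eqxx.
by apply/ffunP => i; rewrite !ffun_updE; case: eqP => // ->.
Qed.

Section SequentialChoice.
Variables (T : finType) (R : pzSemiRingType).
Local Notation fT := {ffun T -> T}.
Local Notation earlier js j := (take (index j js) js).
Variables (C : T -> fT -> bool) (W : T -> fT -> R).

Lemma sum_sequential_choice (js : seq T) :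
  uniq js ->
  (forall j (f f' : fT), j \in js -> {in earlier js j, f =1 f'} -> f j = f' j ->
     C j f = C j f') ->
  (forall j (f f' : fT), j \in js -> {in earlier js j, f =1 f'} -> f j = f' j ->
     W j f = W j f') ->
  (forall j (f : fT), j \in js -> {in earlier js j, forall i, C i f} ->
     \sum_(k | C j (ffun_upd f j k)) W j (ffun_upd f j k) = 1) ->
  \sum_(f : fT | [forall i, (i \notin js) ==> (f i == i)] && all (C^~ f) js)
     \prod_(j <- js) W j f = 1.
Proof.
elim/last_ind: js => [|s x IH] js_uniq C_local W_local C_sum.
  rewrite (eq_bigl (pred1 [ffun i => i])) ?big_pred1_eq ?big_nil // => f /=.
  rewrite andbT; apply/forallP/eqP => [f_id|-> i]; last by rewrite ffunE.
  by apply/ffunP => i; rewrite ffunE; apply/eqP/f_id.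
move: js_uniq; rewrite rcons_uniq => /andP[xNs s_uniq].
have in_rcons j : j \in s -> j \in rcons s x by rewrite mem_rcons inE => ->; rewrite orbT.
have earlier_rcons j : j \in s -> earlier (rcons s x) j = earlier s j.
  by move=> js; rewrite -cats1 index_cat js takel_cat // index_size.
have earlier_last : earlier (rcons s x) x = s.
  by rewrite -cats1 index_cat (negPf xNs) /= eqxx addn0 take_size_cat.
have upd_agree g k : {in s, ffun_upd g x k =1 g}.
  by move=> i iS; rewrite ffun_updE; case: eqP => // ix; rewrite -ix iS in xNs.
have C_upd g k j : j \in s -> C j (ffun_upd g x k) = C j g.
  move=> js; apply: C_local; [exact: in_rcons | | exact: upd_agree].
  by rewrite earlier_rcons // => i /mem_take; apply: upd_agree.
have W_upd g k j : j \in s -> W j (ffun_upd g x k) = W j g.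
  move=> js; apply: W_local; [exact: in_rcons | | exact: upd_agree].
  by rewrite earlier_rcons // => i /mem_take; apply: upd_agree.
rewrite -[RHS](IH s_uniq); first last.
- by move=> j f js Cf; rewrite C_sum ?in_rcons ?earlier_rcons.
- by move=> j f f' js; rewrite -earlier_rcons //; apply/W_local/in_rcons.
- by move=> j f f' js; rewrite -earlier_rcons //; apply/C_local/in_rcons.
rewrite big_mkcond (sum_ffun_upd x x) /= [RHS](bigID (fun g : fT => g x == x)) /=.
rewrite [X in _ = _ + X]big1 ?addr0; last first.
  by move=> g /andP[/andP[/forallP/(_ x)]]; rewrite xNs => /= ->.
rewrite big_andbC big_mkcondr; apply: eq_bigr => g /eqP gx.
have fixed_upd k : [forall i, (i \notin rcons s x) ==> (ffun_upd g x k i == i)] =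
                   [forall i, (i \notin s) ==> (g i == i)].
  apply: eq_forallb => i; rewrite mem_rcons inE ffun_updE.
  by case: (eqVneq i x) => [->|]; rewrite ?gx ?eqxx ?implybT.
under eq_bigr => k _.
  rewrite fixed_upd all_rcons (eq_in_all (C_upd g k)) andbCA andbC big_rcons /=.
  rewrite (eq_big_seq _ (W_upd g k)).
  over.
case: ifP => Pg; last by rewrite big1 // => k _; rewrite Pg.
have Cs : {in s, forall i, C i g} by apply/allP; case/andP: Pg.
transitivity (\prod_(j <- s) W j g *
              \sum_(k | C x (ffun_upd g x k)) W x (ffun_upd g x k)).
  by rewrite big_distrr [RHS]big_mkcond; apply: eq_bigr => k _; case: ifP.
by rewrite C_sum ?mulr1 ?earlier_last // mem_rcons mem_head.
Qed.

End SequentialChoice.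

(** * Geometric weights along a cycle *)

Lemma sum_ranks (R : nmodType) (T : finType) (d : T -> nat) (g : nat -> R) (A : {set T}) :
  {in A &, injective d} ->
  \sum_(k in A) g #|[set k' in A | (d k' < d k)%N]| = \sum_(s < #|A|) g s.
Proof.
move cA: #|A| => m; elim: m A cA => [|m IH] A cA d_inj.
  by rewrite big_ord0 big_pred0 // => k; rewrite (cards0_eq cA) inE.
have [k0 k0A] : {k0 | k0 \in A} by apply/sigW/set0Pn; rewrite -card_gt0 cA.
case: (arg_maxnP d k0A) => x xA x_max; have {}xA : x \in A := xA.
have cAx : #|A :\ x| = m by move: cA; rewrite (cardsD1 x) xA add1n => -[].
have d_inj' : {in A :\ x &, injective d}.
  by move=> a b /setD1P[_ aA] /setD1P[_ bA]; apply: d_inj.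
rewrite big_ord_recr /= -(IH _ cAx d_inj') (bigD1 x) //= addrC; congr (_ + _).
  apply: eq_big => [k|k /andP[kA kx]]; first by rewrite !inE andbC.
  congr (g _); apply: eq_card => k'; rewrite !inE.
  case: (eqVneq k' x) => [->|//]; rewrite xA /=.
  by apply/negbTE; rewrite -leqNgt; apply: x_max.
rewrite -cAx; congr (g _); apply: eq_card => k'; rewrite !inE.
case: (eqVneq k' x) => [->|k'x] /=; first by rewrite ltnn andbF.
apply/andP/idP => [[]//|k'A]; split=> //.
have k'_le_x : (d k' <= d x)%N := x_max k' k'A.
rewrite ltn_neqAle k'_le_x andbT.
by apply: contra_neq k'x => /d_inj; apply.
Qed.

Lemma sum_geometric_weights (F : fieldType) (t : F) (m : nat) :
  1 - t ^+ m != 0 -> \sum_(s < m) (1 - t) * t ^+ s / (1 - t ^+ m) = 1.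
Proof.
move=> tm_neq1; rewrite -big_distrl -big_distrr /=.
by rewrite -opprB mulNr -subrX1 opprB divff.
Qed.

Definition cyc_dist n (j k : 'I_n) : nat :=
  if (j < k)%N then (k - j - 1)%N else (k + n - j - 1)%N.

Lemma cyc_between_dist n (j k k' : 'I_n) : k != j -> k' != j ->
  cyc_between j k k' = (cyc_dist j k' < cyc_dist j k)%N.
Proof.
rewrite /cyc_between /cyc_dist -!val_eqE /=.
case: j k k' => [j ?] [k ?] [k' ?] /= kj k'j.
by case: (ltnP j k) => ?; case: (ltnP j k') => ?; apply/idP/idP; lia.
Qed.

Lemma cyc_dist_inj n (j : 'I_n) : {in [pred k | k != j] &, injective (cyc_dist j)}.
Proof.
move=> k k'; rewrite !inE /cyc_dist -!val_eqE => kj k'j e; apply/val_inj; move: kj k'j e.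
case: j k k' => [j ?] [k ?] [k' ?] /=.
by case: (ltnP j k) => ?; case: (ltnP j k') => ? *; lia.
Qed.

Lemma sum_cyclic_weights (F : fieldType) (t : F) n (A : {set 'I_n}) (j : 'I_n) :
  j \notin A -> 1 - t ^+ #|A| != 0 ->
  \sum_(k in A) (1 - t) * t ^+ #|[set k' in A | cyc_between j k k']| / (1 - t ^+ #|A|) = 1.
Proof.
move=> jNA tA_neq1.
have neq_j k : k \in A -> k != j by apply: contraTneq => ->.
rewrite -[RHS](sum_geometric_weights tA_neq1).
pose g s := (1 - t) * t ^+ s / (1 - t ^+ #|A|).
rewrite -(sum_ranks g (d := cyc_dist j)); last first.
  by move=> k k' kA k'A; apply: cyc_dist_inj; rewrite inE neq_j.
apply: eq_bigr => k kA; congr (g _); apply: eq_card => k'; rewrite !inE.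
by case k'A: (k' \in A); rewrite //= cyc_between_dist ?neq_j.
Qed.

Lemma tQX_neq1 m : (0 < m)%N -> tQ ^+ m != 1.
Proof.
rewrite /tQ -rmorphXn -(rmorph1 (@tofrac _)) tofrac_eq => m_gt0.
apply: contraTneq m_gt0 => /(congr1 (size : {poly rat} -> nat)).
by rewrite size_polyXn size_poly1 => -[->].
Qed.

Lemma count_nth_ord n (s : seq nat) (P : pred nat) : size s = n ->
  count P s = #|[set k : 'I_n | P (nth 0%N s k)]|.
Proof. by move=> sz; rewrite -sum1_count (big_nth 0%N) sz big_mkord sum1_card cardsE. Qed.

Lemma lambar_neq1 lam : all (fun x => x != 1%N) (lambar lam).
Proof. by apply/allP => _ /mapP[x _ ->]; case: ifP => // /negbT. Qed.

Lemma card_top_lambar n (nu lam : seq nat) : size nu = n -> perm_eq nu (lambar lam) ->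
  #|[set i : 'I_n | 0 < nuv nu i]%N| = count (fun x => 1 < x)%N lam.
Proof.
move=> size_nu nu_lambar; rewrite -(count_nth_ord _ size_nu) (permP nu_lambar).
by rewrite count_map; apply: eq_count => -[|[]].
Qed.

Lemma count_gt0_split (s : seq nat) :
  count (fun x => 0 < x)%N s = (count (pred1 1%N) s + count (fun x => 1 < x)%N s)%N.
Proof. by elim: s => //= x s ->; case: x => [|[|x]] /=; lia. Qed.

(** * Choices of the top balls *)

Section Choices.
Variables (n : nat) (nu : seq nat) (S : {set 'I_n}).
Local Notation nv := (@nuv n nu).
Local Notation before := (@processed_before n nu).
Local Notation matched := (@matched_before n nu).
Local Notation fT := {ffun 'I_n -> 'I_n}.

Lemma before_irr i : ~~ before i i.
Proof. by rewrite /processed_before ltnn eqxx ltnn. Qed.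

Lemma before_trans i j k : before i j -> before j k -> before i k.
Proof. by rewrite /processed_before; lia. Qed.

Lemma before_total i j : i != j -> before i j || before j i.
Proof. by rewrite /processed_before -val_eqE /=; lia. Qed.

Lemma before_label i j : before i j -> (nv j <= nv i)%N.
Proof. by rewrite /processed_before; lia. Qed.

Lemma before_of_label_lt i j : (nv j < nv i)%N -> before i j.
Proof. by rewrite /processed_before => ->. Qed.

Lemma matchedP (f : fT) j k :
  reflect (exists i, [/\ (0 < nv i)%N, before i j & f i = k]) (matched f j k).
Proof.
apply: (iffP existsP) => [[i /and3P[? ? /eqP]]|[i [? ? fik]]]; exists i => //.
by apply/and3P; rewrite fik.
Qed.

Lemma matched_local (f f' : fT) j k :
  (forall i, (0 < nv i)%N -> before i j -> f i = f' i) -> matched f j k = matched f' j k.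
Proof.
move=> ff'; apply/matchedP/matchedP => -[i [top_i ij <-]]; exists i.
  by rewrite ff'.
by rewrite -ff'.
Qed.

Definition available (f : fT) (j k : 'I_n) : bool := (k \in S) && ~~ matched f j k.

Definition candidate (f : fT) (j k : 'I_n) : bool := available f j k && (nv k != nv j).

(* When column j is still available at its own turn, the bottom label there
   must be nu_j (larger labels are all matched already), so the pairing of j
   is the forced trivial one. *)
Definition admissible (j : 'I_n) (f : fT) : bool :=
  if available f j j then f j == j else candidate f j (f j).

Definition choice_weight (j : 'I_n) (f : fT) : Qt :=
  if f j == j then 1 else
  (1 - tQ) * tQ ^+ #|[set k | candidate f j k && cyc_between j (f j) k]|
    / (1 - tQ ^+ #|[set k | candidate f j k]|).

Definition admissible_before (f : fT) (j : 'I_n) : Prop :=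
  forall i, (0 < nv i)%N -> before i j -> admissible i f.

Definition good (f : fT) : bool :=
  [forall i, if (0 < nv i)%N then admissible i f else f i == i].

Lemma candidate_local (f f' : fT) j k :
  (forall i, (0 < nv i)%N -> before i j -> f i = f' i) -> candidate f j k = candidate f' j k.
Proof. by move=> ff'; rewrite /candidate /available (matched_local _ ff'). Qed.

Lemma admissible_local (f f' : fT) j :
  (forall i, (0 < nv i)%N -> before i j -> f i = f' i) -> f j = f' j ->
  admissible j f = admissible j f'.
Proof.
move=> ff' fj; rewrite /admissible /available (matched_local _ ff') fj.
by rewrite (candidate_local _ ff').
Qed.

Lemma choice_weight_local (f f' : fT) j :
  (forall i, (0 < nv i)%N -> before i j -> f i = f' i) -> f j = f' j ->
  choice_weight j f = choice_weight j f'.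
Proof.
move=> ff' fj; rewrite /choice_weight fj.
have cand k : candidate f j k = candidate f' j k by apply: candidate_local.
have -> : [set k | candidate f j k] = [set k | candidate f' j k].
  by apply/setP => k; rewrite !inE cand.
have -> // : [set k | candidate f j k && cyc_between j (f' j) k] =
             [set k | candidate f' j k && cyc_between j (f' j) k].
by apply/setP => k; rewrite !inE cand.
Qed.

Lemma admissible_in_S (f : fT) j : admissible j f -> f j \in S.
Proof.
rewrite /admissible /candidate /available.
by case: ifP => [/andP[jS _] /eqP ->|_ /andP[/andP[]]].
Qed.

Lemma admissible_unmatched (f : fT) j : admissible j f -> ~~ matched f j (f j).
Proof.
rewrite /admissible /candidate /available.
by case: ifP => [/andP[_ jN] /eqP ->|_ /andP[/andP[]]].
Qed.

Lemma admissible_fresh (f : fT) i j :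
  (0 < nv i)%N -> before i j -> admissible j f -> f i != f j.
Proof.
move=> top_i ij /admissible_unmatched; apply: contraNneq => fij.
by apply/matchedP; exists i.
Qed.

Lemma admissible_inj (f : fT) i i' : (0 < nv i)%N -> (0 < nv i')%N ->
  admissible i f -> admissible i' f -> f i = f i' -> i = i'.
Proof.
move=> top_i top_i' adm_i adm_i' fii'; apply/eqP.
apply: contraT => /before_total/orP[ii'|i'i].
  by move: (admissible_fresh top_i ii' adm_i'); rewrite fii' eqxx.
by move: (admissible_fresh top_i' i'i adm_i); rewrite fii' eqxx.
Qed.

Lemma available_not_before (f : fT) j k : admissible_before f j ->
  (0 < nv k)%N -> available f j k -> ~~ before k j.
Proof.
move=> adm top_k /andP[kS k_unmatched]; apply: contraNN k_unmatched => kj.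
move: (adm k top_k kj); rewrite /admissible /available kS /=.
case: ifP => [_ /eqP fk|/negbFE /matchedP[i [top_i ik fik]] _].
  by apply/matchedP; exists k.
by apply/matchedP; exists i; split=> //; apply: before_trans kj.
Qed.

Lemma good_fix (f : fT) i : good f -> nv i = 0%N -> f i = i.
Proof. by move=> /forallP/(_ i) + nvi; rewrite nvi => /eqP. Qed.

Lemma good_admissible (f : fT) j : good f -> (0 < nv j)%N -> admissible j f.
Proof. by move=> /forallP/(_ j) + top_j; rewrite top_j. Qed.

Lemma good_inj (f : fT) : good f -> {in [pred i | 0 < nv i]%N &, injective f}.
Proof.
move=> gf i i' top_i top_i'.
by apply: admissible_inj; rewrite ?good_admissible.
Qed.

Hypothesis top_le_S : (#|[set i | 0 < nv i]| <= #|S|)%N.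

Lemma candidates_exist (f : fT) j : admissible_before f j -> (0 < nv j)%N ->
  ~~ available f j j -> (0 < #|[set k | candidate f j k]|)%N.
Proof.
move=> adm top_j jNa; rewrite card_gt0; apply: contraTneq top_le_S => no_cand.
set P := [set i | (0 < nv i)%N && before i j].
set L := [set i | [&& nv i == nv j, ~~ before i j & i != j]].
have f_inj : {in P &, injective f}.
  move=> a b; rewrite !inE => /andP[top_a aj] /andP[top_b bj].
  by apply: admissible_inj; rewrite ?adm.
have S_sub : S \subset f @: P :|: L.
  apply/subsetP => k kS; rewrite inE.
  have [/matchedP[i [top_i ij <-]]|k_unmatched] := boolP (matched f j k).
    by rewrite imset_f // inE top_i.
  have k_av : available f j k by rewrite /available kS.
  have /eqP nvk : nv k == nv j.
    by apply: contraT => nvk; have := in_set0 k; rewrite -no_cand inE /candidate k_av nvk.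
  have top_k : (0 < nv k)%N by rewrite nvk.
  rewrite inE nvk eqxx (available_not_before adm top_k k_av) /=.
  by apply/orP; right; apply: contraTneq k_av => ->.
have PL_top : P :|: L \subset [set i | 0 < nv i]%N :\ j.
  apply/subsetP => i; rewrite !inE => /orP[/andP[top_i ij]|/and3P[/eqP-> _ ->]] //.
  by rewrite top_i andbT; apply: contraTneq ij => ->; apply: before_irr.
have PL0 : P :&: L = set0.
  by apply/setP => i; rewrite !inE; case: (before i j); rewrite ?andbF.
rewrite -ltnNge; apply: leq_ltn_trans (subset_leq_card S_sub) _.
apply: leq_ltn_trans (leq_card_setU _ _) _; rewrite card_in_imset //.
rewrite -cardsUI PL0 cards0 addn0 (cardsD1 j [set i | 0 < nv i]%N) inE top_j add1n ltnS.
by rewrite subset_leq_card.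
Qed.

Lemma sum_choice_weights (f : fT) j : admissible_before f j -> (0 < nv j)%N ->
  \sum_(k | admissible j (ffun_upd f j k)) choice_weight j (ffun_upd f j k) = 1.
Proof.
move=> adm top_j.
have upd_before k i : (0 < nv i)%N -> before i j -> ffun_upd f j k i = f i.
  by move=> _ ij; rewrite ffun_updE; case: eqP ij => // ->; rewrite (negPf (before_irr j)).
have avail k : available (ffun_upd f j k) j =1 available f j.
  by move=> k'; rewrite /available (matched_local _ (upd_before k)).
have cand k : candidate (ffun_upd f j k) j =1 candidate f j.
  by move=> k'; rewrite /candidate avail.
have upd_j k : ffun_upd f j k j = k by rewrite ffun_updE eqxx.
have [j_av|jNa] := boolP (available f j j).
  rewrite (big_pred1 j) => [|k]; last by rewrite /admissible avail j_av upd_j.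
  by rewrite /choice_weight upd_j eqxx.
set A := [set k | candidate f j k].
have jNA : j \notin A by rewrite inE /candidate (negPf jNa).
rewrite (eq_bigl [in A]) => [|k]; last first.
  by rewrite /admissible avail (negPf jNa) upd_j cand inE.
rewrite -[RHS](sum_cyclic_weights (t := tQ) jNA); last first.
  by rewrite subr_eq0 eq_sym tQX_neq1 // candidates_exist.
apply: eq_bigr => k kA; rewrite /choice_weight upd_j ifN; last by apply: contraNneq jNA => <-.
have -> : [set k' | candidate (ffun_upd f j k) j k'] = A.
  by apply/setP => k'; rewrite !inE cand.
have -> // : [set k' | candidate (ffun_upd f j k) j k' && cyc_between j k k'] =
             [set k' in A | cyc_between j k k'].
by apply/setP => k'; rewrite !inE cand.
Qed.

Local Notation before_eq := [rel i j | (i == j) || before i j].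

Definition processing_order : seq 'I_n :=
  sort before_eq [seq i <- enum 'I_n | (0 < nv i)%N].

Lemma mem_processing_order i : (i \in processing_order) = (0 < nv i)%N.
Proof. by rewrite mem_sort mem_filter mem_enum andbT. Qed.

Lemma processing_order_uniq : uniq processing_order.
Proof. by rewrite sort_uniq filter_uniq ?enum_uniq. Qed.

Lemma before_processed_earlier i j : (0 < nv i)%N -> (0 < nv j)%N -> before i j ->
  i \in take (index j processing_order) processing_order.
Proof.
move=> top_i top_j ij; rewrite in_take ?mem_processing_order // ltnNge.
have le_trans : transitive before_eq.
  move=> y x z /= /orP[/eqP->|xy] // /orP[/eqP<-|yz]; first by rewrite xy orbT.
  by rewrite (before_trans xy yz) orbT.
have le_total : total before_eq.
  move=> x y; case: (eqVneq x y) => [->|/before_total]; first by rewrite /= eqxx.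
  by rewrite /= => /orP[] ->; rewrite !orbT.
have le_refl : reflexive before_eq by move=> x /=; rewrite eqxx.
have ord_sorted : sorted before_eq processing_order.
  exact: sort_sorted.
have := sorted_leq_index le_trans le_refl ord_sorted j i.
rewrite !mem_processing_order => /(_ top_j top_i) ji; apply/negP => /ji /orP[/eqP ji'|ji'].
  by rewrite ji' (negPf (before_irr i)) in ij.
by move: (before_irr i); rewrite (before_trans ij ji').
Qed.

Lemma sum_good_weights :
  \sum_(f | good f) \prod_(j | (0 < nv j)%N) choice_weight j f = 1.
Proof.
set js := processing_order.
have good_js f :
    good f = [forall i, (i \notin js) ==> (f i == i)] && all (admissible^~ f) js.
  apply/forallP/andP => [gf|[/forallP fix_f /allP adm_f] i].
    split; first by apply/forallP => i; rewrite mem_processing_order; case: ifP (gf i).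
    by apply/allP => j; rewrite mem_processing_order => top_j; move: (gf j); rewrite top_j.
  case: ifP (fix_f i) => top_i; rewrite mem_processing_order top_i //= => _.
  by apply: adm_f; rewrite mem_processing_order.
have prod_js f : \prod_(j | (0 < nv j)%N) choice_weight j f = \prod_(j <- js) choice_weight j f.
  by rewrite [RHS](perm_big _ (permEl (perm_sort _ _))) big_filter big_enum_cond.
rewrite (eq_bigl _ _ good_js); under eq_bigr do rewrite prod_js.
have earlier i j : j \in js -> (0 < nv i)%N -> before i j -> i \in take (index j js) js.
  by rewrite mem_processing_order => top_j top_i; apply: before_processed_earlier.
apply: sum_sequential_choice processing_order_uniq _ _ _.
- move=> j f f' jjs agree; apply: admissible_local => i top_i ij.
  by apply/agree/earlier.
- move=> j f f' jjs agree; apply: choice_weight_local => i top_i ij.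
  by apply/agree/earlier.
- move=> j f jjs adm; apply: sum_choice_weights; last by rewrite -mem_processing_order.
  by move=> i top_i ij; apply/adm/earlier.
Qed.

(** * Queues as choice functions *)

Definition bottom_label (f : fT) (k : 'I_n) : nat :=
  if [pick i | (0 < nv i)%N && (f i == k)] is Some i then nv i else nat_of_bool (k \in S).

Definition bottom_row (f : fT) : seq nat := [seq bottom_label f k | k <- enum 'I_n].

Lemma size_bottom_row f : size (bottom_row f) = n.
Proof. by rewrite size_map size_enum_ord. Qed.

Lemma nth_bottom_row f (k : 'I_n) : muv (bottom_row f) k = bottom_label f k.
Proof. by rewrite /muv (nth_map k) ?nth_ord_enum // size_enum_ord. Qed.

Lemma count_bottom_row f (P : pred nat) :
  count P (bottom_row f) = #|[set k | P (bottom_label f k)]|.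
Proof.
rewrite (count_nth_ord _ (size_bottom_row f)); apply: eq_card => k.
by rewrite !inE -/(muv _ k) nth_bottom_row.
Qed.

Hypothesis size_nu : size nu = n.
Hypothesis nu_neq1 : all (fun x => x != 1%N) nu.

Lemma nv_neq1 i : nv i != 1%N.
Proof.
rewrite /nuv; case: (ltnP i (size nu)) => [/(mem_nth 0%N)/(allP nu_neq1) //|big_i].
by rewrite nth_default.
Qed.

Section Queue.
Variables (mu : seq nat) (f : fT).
Local Notation mv := (@muv n mu).
Hypothesis supp_mu : supp n mu = S.
Hypothesis mu_ge_nu : forall i, (mv i == 0%N) || (nv i <= mv i)%N.
Hypothesis f_queue : tlq_valid nu mu f.

Lemma mu_pos k : (0 < mv k)%N = (k \in S).
Proof. by rewrite -supp_mu inE. Qed.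

Lemma queue_fix i : nv i = 0%N -> f i = i.
Proof. by case/and5P: f_queue => /forallP/(_ i) + _ _ _ _ nvi; rewrite nvi => /eqP. Qed.

Lemma queue_label i : (0 < nv i)%N -> mv (f i) = nv i.
Proof. by case/and5P: f_queue => _ /forallP/(_ i)/implyP + _ _ _ top_i => /(_ top_i)/eqP. Qed.

Lemma queue_inj i i' : (0 < nv i)%N -> (0 < nv i')%N -> f i = f i' -> i = i'.
Proof.
case/and5P: f_queue => _ _ /forallP/(_ i)/forallP/(_ i')/implyP inj _ _ top_i top_i' fii'.
by apply/eqP/inj; rewrite top_i top_i' fii' /=.
Qed.

Lemma queue_onto k : (1 < mv k)%N -> exists2 i, (0 < nv i)%N & f i = k.
Proof.
case/and5P: f_queue => _ _ _ /forallP/(_ k)/implyP onto _ /onto/existsP[i /andP[top_i /eqP]].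
by exists i.
Qed.

Lemma queue_trivial i : (0 < nv i)%N -> mv i = nv i -> f i = i.
Proof.
case/and5P: f_queue => _ _ _ _ /forallP/(_ i)/implyP triv top_i mvi.
by apply/eqP/triv; rewrite top_i mvi eqxx.
Qed.

Lemma nu_le_mu k : k \in S -> (nv k <= mv k)%N.
Proof. by rewrite -mu_pos lt0n; move: (mu_ge_nu k) => /orP[->|]. Qed.

(* A larger bottom label would have been matched by an earlier top ball. *)
Lemma unmatched_label j k : (0 < nv j)%N -> k \in S -> ~~ matched f j k ->
  (nv j <= nv k)%N -> mv k = nv k.
Proof.
move=> top_j kS k_unmatched jk; have nu_mu := nu_le_mu kS.
have nvj_gt1 : (1 < nv j)%N by have := nv_neq1 j; move: top_j; case: (nv j) => [|[]].
apply/eqP; rewrite eqn_leq nu_mu andbT leqNgt; apply/negP => lt_mu.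
have [i top_i fik] := queue_onto (leq_trans nvj_gt1 (leq_trans jk (ltnW lt_mu))).
move/negP: k_unmatched; apply; apply/matchedP; exists i; split=> //.
by apply: before_of_label_lt; rewrite -(queue_label top_i) fik (leq_trans _ lt_mu) ?ltnS.
Qed.

Lemma queue_admissible j : (0 < nv j)%N -> admissible j f.
Proof.
move=> top_j.
have fj_unmatched : ~~ matched f j (f j).
  apply/matchedP => -[i [top_i ij fij]].
  by move: ij; rewrite (queue_inj top_i top_j fij); apply/negP/before_irr.
rewrite /admissible /candidate /available; case: ifP => [/andP[jS jN]|jNa].
  by rewrite (queue_trivial top_j (unmatched_label top_j jS jN (leqnn _))).
have fjS : f j \in S by rewrite -mu_pos queue_label.
rewrite fjS fj_unmatched /=; apply: contraFN jNa => /eqP nv_fj.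
have top_fj : (0 < nv (f j))%N by rewrite nv_fj.
have fj_fix := queue_trivial top_fj (etrans (queue_label top_j) (esym nv_fj)).
by move: fjS fj_unmatched; rewrite (queue_inj top_fj top_j fj_fix) => -> ->.
Qed.

Lemma is_free_candidate j k : (0 < nv j)%N -> is_free nu mu f j k = candidate f j k.
Proof.
move=> top_j; rewrite /is_free /candidate /available mu_pos.
case kS: (k \in S) => //=; case: (boolP (matched f j k)) => //= k_unmatched.
case: (eqVneq (nv k) (nv j)) => [nvk|] //=.
by rewrite (unmatched_label top_j kS k_unmatched) nvk ?eqxx.
Qed.

Lemma wt_choice_weight j : (0 < nv j)%N -> f j != j -> wt nu mu 1 tQ f j = choice_weight j f.
Proof.
move=> top_j fj; rewrite /wt /choice_weight (negPf fj) /skipped /free_count.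
have free k : is_free nu mu f j k = candidate f j k by apply: is_free_candidate.
have -> : [set k | is_free nu mu f j k] = [set k | candidate f j k].
  by apply/setP => k; rewrite !inE free.
have -> : [set k | is_free nu mu f j k && cyc_between j (f j) k] =
          [set k | candidate f j k && cyc_between j (f j) k].
  by apply/setP => k; rewrite !inE free.
by rewrite !expr1n mul1r if_same mulr1.
Qed.

Lemma queue_good : good f.
Proof.
apply/forallP => i; case: ifP => [|/negbT]; first exact: queue_admissible.
by rewrite -eqn0Ngt => /eqP/queue_fix ->.
Qed.

Lemma queue_bottom_row : size mu = n -> mu = bottom_row f.
Proof.
move=> size_mu; apply: (@eq_from_nth _ 0%N); first by rewrite size_bottom_row.
move=> k0; rewrite size_mu => lt_k0; pose k := Ordinal lt_k0.
rewrite -[k0]/(nat_of_ord k) -/(mv k) -/(muv _ k) nth_bottom_row /bottom_label.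
case: pickP => [i /andP[top_i /eqP <-]|none]; first exact: queue_label.
have := mu_pos k; case: (k \in S) => /=; last by move/negbT; rewrite -eqn0Ngt => /eqP.
case: (mv k) (@queue_onto k) => [|[|m]] // onto _.
by have [i top_i fik] := onto isT; move: (none i); rewrite top_i fik eqxx.
Qed.

End Queue.

Section GoodBottomRow.
Variable f : fT.
Hypothesis f_good : good f.

Lemma bottom_label_top i : (0 < nv i)%N -> bottom_label f (f i) = nv i.
Proof.
move=> top_i; rewrite /bottom_label; case: pickP => [i' /andP[top_i' /eqP]|/(_ i)].
  by move/(good_inj f_good) => ->.
by rewrite top_i eqxx.
Qed.

Lemma bottom_labelP k :
  (exists2 i, (0 < nv i)%N & f i = k) \/
  (forall i, (0 < nv i)%N -> f i != k) /\ bottom_label f k = (k \in S).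
Proof.
rewrite /bottom_label; case: pickP => [i /andP[top_i /eqP]|none]; first by left; exists i.
by right; split=> // i top_i; move: (none i); rewrite top_i => /negbT.
Qed.

Lemma bottom_label_pos k : (0 < bottom_label f k)%N = (k \in S).
Proof.
case: (bottom_labelP k) => [[i top_i <-]|[_ ->]]; last by case: (k \in S).
by rewrite bottom_label_top // top_i admissible_in_S // good_admissible.
Qed.

Lemma supp_bottom_row : supp n (bottom_row f) = S.
Proof. by apply/setP => k; rewrite inE -/(muv _ k) nth_bottom_row bottom_label_pos. Qed.

Lemma bottom_label_ge_nu i : (bottom_label f i == 0%N) || (nv i <= bottom_label f i)%N.
Proof.
have [nvi0|top_i] := posnP (nv i); first by rewrite nvi0 orbT.
have [->|bl_pos] := posnP (bottom_label f i); first by [].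
move: (good_admissible f_good top_i); rewrite /admissible /available.
rewrite -bottom_label_pos bl_pos /=; case: ifP => [_ /eqP fi|].
  by rewrite -{2}fi bottom_label_top ?leqnn ?orbT.
move=> /negbFE/matchedP[i' [top_i' i'i fi']] _.
by rewrite -{2}fi' bottom_label_top // (before_label i'i).
Qed.

Lemma bottom_row_queue : tlq_valid nu (bottom_row f) f.
Proof.
apply/and5P; split; apply/forallP => i.
- by apply/implyP => /eqP nvi; rewrite (good_fix f_good nvi).
- by apply/implyP => top_i; rewrite nth_bottom_row bottom_label_top.
- apply/forallP => i'; apply/implyP => /and3P[top_i top_i' /eqP fii'].
  by rewrite (good_inj f_good top_i top_i' fii').
- apply/implyP; rewrite nth_bottom_row.
  case: (bottom_labelP i) => [[i' top_i' <-] _|[_ ->]]; last by case: (i \in S).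
  by apply/existsP; exists i'; rewrite top_i' eqxx.
- apply/implyP; rewrite nth_bottom_row => /andP[top_i /eqP bl_i].
  apply: contraT => fi; move: (good_admissible f_good top_i).
  rewrite /admissible /available -bottom_label_pos bl_i top_i /=.
  case: ifP => [_ /eqP fii|/negbFE/matchedP[i' [top_i' i'i fi']] _].
    by rewrite fii eqxx in fi.
  have nv_i' : nv i' = nv i by rewrite -bottom_label_top // fi' bl_i.
  move: (good_admissible f_good top_i'); rewrite /admissible /candidate fi' nv_i' eqxx andbF.
  by case: ifP => // _ /eqP ii'; move: i'i; rewrite ii' (negPf (before_irr _)).
Qed.

Lemma count_bottom_row_label x : (1 < x)%N ->
  count (pred1 x) (bottom_row f) = count (pred1 x) nu.
Proof.
move=> x_gt1; rewrite count_bottom_row (count_nth_ord _ size_nu).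
have top_x i : nv i == x -> (0 < nv i)%N by move/eqP->; apply: ltnW.
have -> : [set k | bottom_label f k == x] = f @: [set i | nv i == x].
  apply/setP => k; rewrite inE; case: (bottom_labelP k) => [[i top_i <-]|[none ->]].
    rewrite bottom_label_top //; apply/idP/imsetP => [nvi|[i']].
      by exists i; rewrite ?inE.
    by rewrite inE => i'x /esym fi'; rewrite -(good_inj f_good (top_x _ i'x) top_i fi').
  apply/idP/imsetP => [/eqP k_x|[i i_x k_eq]].
    by rewrite -k_x in x_gt1; case: (k \in S) x_gt1.
  by rewrite inE in i_x; move: (none i (top_x i i_x)); rewrite k_eq eqxx.
rewrite card_in_imset // => i i' i_x i'_x.
by rewrite !inE in i_x i'_x; exact: (good_inj f_good (top_x _ i_x) (top_x _ i'_x)).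
Qed.

Lemma count_bottom_row_eq0 : count (pred1 0%N) (bottom_row f) = #|~: S|.
Proof.
by rewrite count_bottom_row; apply: eq_card => k; rewrite !inE eqn0Ngt bottom_label_pos.
Qed.

Lemma count_bottom_row_eq1 :
  count (pred1 1%N) (bottom_row f) = (#|S| - #|[set i | 0 < nv i]|)%N.
Proof.
rewrite count_bottom_row.
have -> : [set k | bottom_label f k == 1%N] = S :\: f @: [set i | 0 < nv i]%N.
  apply/setP => k; rewrite !inE; case: (bottom_labelP k) => [[i top_i <-]|[none ->]].
    by rewrite bottom_label_top // imset_f ?inE // (negPf (nv_neq1 i)).
  have kN : k \notin f @: [set i | 0 < nv i]%N.
    by apply/imsetP => -[i]; rewrite inE => /none fik k_eq; rewrite k_eq eqxx in fik.
  by rewrite (negPf kN); case: (k \in S).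
rewrite cardsD (setIidPr _); last first.
  apply/subsetP => k /imsetP[i]; rewrite inE => top_i ->.
  by rewrite admissible_in_S ?good_admissible.
by rewrite card_in_imset // => i i'; rewrite !inE; apply: good_inj.
Qed.

Lemma bottom_row_require : tlq_require n nu (bottom_row f).
Proof.
apply/and5P; split; rewrite ?size_nu ?size_bottom_row //.
  apply/allP => x _; rewrite /= !count_filter; apply/eqP.
  case: (ltnP 1 x) => [x_gt1|x_le1].
    rewrite !(@eq_count _ _ (pred1 x)) ?count_bottom_row_label // => y /=.
      by case: eqP => // ->.
    by case: eqP => // ->.
  rewrite !(@eq_count _ _ pred0) ?count_pred0 // => y /=;
    by case: eqP => // ->; rewrite ltnNge x_le1.
by apply/forallP => i; rewrite nth_bottom_row bottom_label_ge_nu.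
Qed.

Lemma bottom_row_perm lam : size lam = n -> perm_eq nu (lambar lam) ->
  #|S| = count (fun x => 0 < x)%N lam -> perm_eq (bottom_row f) lam.
Proof.
move=> size_lam nu_lambar card_S; apply/allP => x _; apply/eqP.
have card_top := card_top_lambar size_nu nu_lambar.
case: x => [|[|x]].
- have := count_predC (fun x => 0 < x)%N lam; rewrite size_lam -card_S.
  rewrite (eq_count (a2 := pred1 0%N)) => [|y]; last by rewrite /= -eqn0Ngt.
  rewrite count_bottom_row_eq0 //; have := cardsC S; rewrite card_ord => cardSC countP.
  by apply/eqP; rewrite -(eqn_add2l #|S|) cardSC countP.
- by rewrite count_bottom_row_eq1 // card_top card_S count_gt0_split addnK.
- rewrite count_bottom_row_label // (permP nu_lambar) count_map.
  by apply: eq_count => -[|[|y]].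
Qed.

End GoodBottomRow.

Lemma acoef_q1E mu : size mu = n -> supp n mu = S ->
  acoef_q1 n nu mu =
  \sum_(f | good f && (bottom_row f == mu)) \prod_(j | (0 < nv j)%N) choice_weight j f.
Proof.
move=> size_mu supp_mu; rewrite /acoef_q1 /acoef.
case: ifP => [req|/negbT req]; last first.
  rewrite big1 // => f /andP[f_good /eqP bottom_mu].
  by rewrite -bottom_mu bottom_row_require in req.
have mu_ge_nu : forall i, (muv mu i == 0%N) || (nv i <= muv mu i)%N.
  by case/and5P: req => _ _ _ _ /forallP.
rewrite big_mkcond [RHS]big_mkcond; apply: eq_bigr => f _; rewrite inE.
have -> : tlq_valid nu mu f = good f && (bottom_row f == mu).
  apply/idP/andP => [f_queue|[f_good /eqP <-]]; last exact: bottom_row_queue.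
  rewrite (queue_good supp_mu mu_ge_nu f_queue).
  by rewrite -(queue_bottom_row supp_mu f_queue size_mu).
case: ifP => // /andP[f_good /eqP bottom_mu]; rewrite big_mkcondr /=.
have f_queue : tlq_valid nu mu f by rewrite -bottom_mu bottom_row_queue.
apply: eq_bigr => j top_j; case: ifP => [fj|/negbFE/eqP fj].
  by rewrite (wt_choice_weight supp_mu mu_ge_nu f_queue top_j fj).
by rewrite /choice_weight fj eqxx.
Qed.

Lemma sum_acoef_q1 lam : size lam = n -> perm_eq nu (lambar lam) ->
  #|S| = count (fun x => 0 < x)%N lam ->
  \sum_(mu <- permutations lam | supp n mu == S) acoef_q1 n nu mu = 1.
Proof.
move=> size_lam nu_lambar card_S; apply: etrans _ sum_good_weights.
transitivity (\sum_(mu <- permutations lam | supp n mu == S) \sum_(f | good f)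
    if bottom_row f == mu then \prod_(j | (0 < nv j)%N) choice_weight j f else 0).
  rewrite [LHS]big_seq_cond [RHS]big_seq_cond.
  apply: eq_bigr => mu /andP[]; rewrite mem_permutations => mu_lam /eqP supp_mu.
  by rewrite acoef_q1E ?big_mkcondr // (perm_size mu_lam).
rewrite exchange_big; apply: eq_bigr => f f_good; rewrite -big_mkcondr /=.
rewrite (eq_bigl (pred1 (bottom_row f))) => [|mu]; last first.
  by rewrite /= eq_sym andb_idl // => /eqP <-; rewrite supp_bottom_row.
rewrite -big_filter filter_pred1_uniq ?permutations_uniq ?big_seq1 //.
by rewrite mem_permutations bottom_row_perm.
Qed.

End Choices.

Theorem lemma7p3 (n : nat) (lam : seq nat) (nu : seq nat) (S : {set 'I_n}) :
  size lam = n ->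
  sorted geq lam ->
  perm_eq nu (lambar lam) ->
  #|S| = count (fun x => (0 < x)%N) lam ->
  \sum_(mu <- permutations lam | supp n mu == S) acoef_q1 n nu mu = 1.
Proof.
move=> size_lam _ nu_lambar card_S.
have size_nu : size nu = n by rewrite (perm_size nu_lambar) size_map.
have nu_neq1 : all (fun x => x != 1%N) nu by rewrite (perm_all _ nu_lambar) lambar_neq1.
have top_le_S : (#|[set i : 'I_n | 0 < nuv nu i]| <= #|S|)%N.
  by rewrite (card_top_lambar size_nu nu_lambar) card_S; apply: sub_count => x /ltnW.
exact: (sum_acoef_q1 top_le_S size_nu nu_neq1 size_lam nu_lambar card_S).
Qed.
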